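(* Let $G$ be connected with weights $w:E\to\mathbb{R}_{>0}$ and let $\pi$ be a vertex order. Every metric $m$ on $G_\pi^*$ that respects $w$ and satisfies the lower triangle inequality is customized, i.e. for all $s,t\in V$ there is an up-down $s$–$t$ path in $G_\pi^*$ whose $m$-length equals $\mathrm{dist}_I(s,t)$.
   Context: Let $G=(V,E)$ be a finite simple undirected graph with $n=|V|$ vertices. A vertex order is a bijection $\pi:\{1,\dots,n\}\to V$; the rank of $v$ is $\pi^{-1}(v)$. Contracting a vertex $v$ in a graph means deleting $v$ and its incident edges and adding an edge between every pair of former neighbors of $v$ that are not already adjacent. The core graph $G_{\pi,i}$ is obtained from $G$ by contracting $\pi(1),\dots,\pi(i-1)$ in this order. $G_\pi^*$ is the graph on $V$ whose edge set is the union of the edge sets of all $G_{\pi,i}$, $i=1,\dots,n$ (i.e. $G$ together with all edges inserted during the contractions). Let $w:E\to\mathbb{R}_{>0}$ and let $\mathrm{dist}_I(s,t)$ be the shortest $s$–$t$ path length in $(G,w)$. A metric is a map $m$ assigning to every edge of $G_\pi^*$ a value in $\mathbb{R}_{>0}\cup\{\infty\}$; the $m$-length of a path in $G_\pi^*$ is the sum of $m$ over its edges. An up-down path is a path $v_0,\dots,v_k$ in $G_\pi^*$ for which there is $j$ with the ranks strictly increasing along $v_0,\dots,v_j$ and strictly decreasing along $v_j,\dots,v_k$. $\mathrm{dist}_A(s,t)$ is the minimum $m$-length of an $s$–$t$ path in $G_\pi^*$, and $\mathrm{dist}_{UD}(s,t)$ the minimum $m$-length of an up-down $s$–$t$ path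 ($\infty$ if none). The metric $m$ respects $w$ if $\mathrm{dist}_A(s,t)=\mathrm{dist}_I(s,t)$ for all $s,t$; it is customized if moreover $\mathrm{dist}_{UD}(s,t)=\mathrm{dist}_A(s,t)$ for all $s,t$. It satisfies the lower triangle inequality if for every edge $\{x,y\}$ of $G_\pi^*$ and every vertex $z$ of rank smaller than the ranks of both $x$ and $y$ that is adjacent to both $x$ and $y$ in $G_\pi^*$, $m(\{x,y\})\le m(\{x,z\})+m(\{z,y\})$. *)

From HB Require Import structures.
From mathcomp Require Import all_boot all_order all_algebra.
Set Implicit Arguments. Unset Strict Implicit. Unset Printing Implicit Defensive.
Import Order.TTheory GRing.Theory Num.Theory.

Section CH.
Variable T : finType.
(* rank = pi^{-1}, with ranks 0..n-1 (paper: 1..n) *)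
Variable rank : T -> 'I_#|T|.

(* core i : edge relation of the core graph after contracting the
   vertices of rank 0, ..., i-1 (in this order), i.e. G_{pi,i+1} of the paper.
   Only vertices of rank >= i are present. *)
Fixpoint core (e : rel T) (i : nat) : rel T :=
  match i with
  | 0 => e
  | i'.+1 => fun x y =>
      [&& i' < rank x, i' < rank y, x != y &
          core e i' x y ||
          [exists v, [&& nat_of_ord (rank v) == i', core e i' v x & core e i' v y]]]
  end.

Definition gstar (e : rel T) : rel T :=
  fun x y => [exists i : 'I_#|T|, core e i x y].

Definition updown (s : T) (p : seq T) : Prop :=
  exists j : nat,
    sorted ltn (map (fun v => nat_of_ord (rank v)) (take j.+1 (s :: p))) /\
    sorted gtn (map (fun v => nat_of_ord (rank v)) (drop j (s :: p))).
End CH.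

Section Ext.
Variable R : realFieldType.
Local Open Scope ring_scope.

(* extended positive reals: None stands for infinity *)
Definition eadd (a b : option R) : option R :=
  match a, b with Some x, Some y => Some (x + y) | _, _ => None end.
Definition ele (a b : option R) : bool :=
  match a, b with
  | _, None => true
  | None, Some _ => false
  | Some x, Some y => x <= y
  end.

Variable T : finType.

Definition wlen (w : T -> T -> R) (s : T) (p : seq T) : R :=
  foldr +%R 0 (pairmap w s p).
Definition mlen (m : T -> T -> option R) (s : T) (p : seq T) : option R :=
  foldr eadd (Some 0) (pairmap m s p).

Definition is_distI (e : rel T) (w : T -> T -> R) (s t : T) (d : R) : Prop :=
  (forall p, path e s p -> last s p = t -> d <= wlen w s p) /\
  (exists p, [/\ path e s p, last s p = t & wlen w s p = d]).

Definition is_distA (estar : rel T) (m : T -> T -> option R) (s t : T)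
    (d : option R) : Prop :=
  (forall p, path estar s p -> last s p = t -> ele d (mlen m s p)) /\
  (d = None \/ exists p, [/\ path estar s p, last s p = t & mlen m s p = d]).

Definition is_metric (estar : rel T) (m : T -> T -> option R) : Prop :=
  (forall x y, m x y = m y x) /\
  (forall x y, estar x y -> if m x y is Some r then 0 < r else true).

Definition respects (e estar : rel T) (w : T -> T -> R) (m : T -> T -> option R) :=
  forall s t d, is_distI e w s t d -> is_distA estar m s t (Some d).

Definition lower_triangle (rank : T -> 'I_#|T|) (estar : rel T)
    (m : T -> T -> option R) : Prop :=
  forall x y z, estar x y -> estar x z -> estar z y ->
    (rank z < rank x)%N -> (rank z < rank y)%N ->
    ele (m x y) (eadd (m x z) (m z y)).
End Ext.

From HB Require Import structures.
From mathcomp Require Import all_boot all_order all_algebra.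
Import Order.TTheory GRing.Theory Num.Theory.
Local Open Scope ring_scope.
Set Implicit Arguments. Unset Strict Implicit.

(* Every path of G_pi^* can be turned into an up-down path with
   the same end points and no larger m-length.  The transformation prepends
   the edges of the path one at a time, from the end, to an up-down path: if a
   new first vertex s sits above the next vertex x, and x is a valley (its
   successor y is above it too), then s and y are two higher-ranked
   neighbours of x in G_pi^*, hence adjacent in G_pi^* (contracting x inserts
   the edge s-y); the lower triangle inequality lets us replace s,x,y by s,y,
   and we recurse, or drop the loop s,x,s when s = y (m is nonnegative).
   Applied to a path of m-length dist_A(s,t) = dist_I(s,t), which exists
   because m respects w, this yields an up-down path that is no longer, hence
   (by minimality of dist_A) exactly as long. *)

Section ExtendedReals.
Variable R : realFieldType.

Definition enneg (a : option R) : bool := if a is Some r then 0 <= r else true.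

Lemma ele_refl (a : option R) : ele a a.
Proof. by case: a => //= r. Qed.

Lemma ele_trans (a b c : option R) : ele a b -> ele b c -> ele a c.
Proof. by case: a; case: b; case: c => //= x y z; apply: le_trans. Qed.

Lemma ele_anti (d : R) (a : option R) : ele (Some d) a -> ele a (Some d) -> a = Some d.
Proof. by case: a => //= r h1 h2; congr Some; apply: le_anti; rewrite h1 h2. Qed.

Lemma ele_add (a a' b b' : option R) :
  ele a a' -> ele b b' -> ele (eadd a b) (eadd a' b').
Proof. by case: a; case: a'; case: b; case: b' => //= *; apply: lerD. Qed.

Lemma eaddA (a b c : option R) : eadd a (eadd b c) = eadd (eadd a b) c.
Proof. by case: a; case: b; case: c => //= *; rewrite addrA. Qed.

Lemma ele_addl (a c : option R) : enneg a -> ele c (eadd a c).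
Proof. by case: a; case: c => //= x y hy; rewrite lerDr. Qed.

Lemma mlen_cons (T : finType) (m : T -> T -> option R) s x q :
  mlen m s (x :: q) = eadd (m s x) (mlen m x q).
Proof. by []. Qed.
End ExtendedReals.

Fixpoint up_then_down (a : nat) (l : seq nat) : bool :=
  match l with
  | [::] => true
  | b :: l' => if (a < b)%N then up_then_down b l' else path gtn a l
  end.

Lemma up_then_downP (a : nat) (l : seq nat) : up_then_down a l ->
  exists j, sorted ltn (take j.+1 (a :: l)) /\ sorted gtn (drop j (a :: l)).
Proof.
elim: l a => [|b l IH] a /=; first by move=> _; exists 0%N.
case: ifP => [hab /IH [j [h1 h2]]|_ h]; last by exists 0%N.
by exists j.+1; split => //=; rewrite hab.
Qed.

Section FillIn.
Variables (T : finType) (rank : T -> 'I_#|T|) (e : rel T).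
Hypotheses (e_sym : symmetric e) (e_irr : irreflexive e).

Local Notation core := (core rank e).
Local Notation gs := (gstar rank e).

Lemma core_sym i x y : core i x y -> core i y x.
Proof.
elim: i x y => [|i IH] x y /=; first by rewrite e_sym.
case/and4P => hx hy hne /orP [h|/existsP [v /and3P [hv h1 h2]]];
  apply/and4P; split => //; rewrite 1?eq_sym //; apply/orP.
  by left; apply: IH.
by right; apply/existsP; exists v; rewrite hv h1 h2.
Qed.

Lemma core_neq i x y : core i x y -> x != y.
Proof.
case: i => [|i] /=; last by case/and4P.
by apply: contraTneq => ->; rewrite e_irr.
Qed.

Lemma core_rank i x y : core i x y -> (i <= rank x)%N && (i <= rank y)%N.
Proof. by case: i => [|i] //= /and4P [-> ->]. Qed.

Lemma core_mono i k x y : core i x y -> (i <= k)%N -> (k <= rank x)%N ->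
  (k <= rank y)%N -> core k x y.
Proof.
move=> hc; elim: k => [|k IH]; first by rewrite leqn0 => /eqP <-.
rewrite leq_eqVlt => /orP [/eqP <- //|hik] hx hy /=.
by rewrite hx hy (core_neq hc) /= IH // ltnW.
Qed.

Lemma gstar_sym x y : gs x y -> gs y x.
Proof. by case/existsP => i h; apply/existsP; exists i; apply: core_sym. Qed.

Lemma gstar_neq x y : gs x y -> x != y.
Proof. by case/existsP => i /core_neq. Qed.

Lemma gstar_core v a : gs v a -> (rank v <= rank a)%N -> core (rank v) v a.
Proof.
case/existsP => i hi ha; apply: (core_mono hi) => //.
by case/andP: (core_rank hi).
Qed.

Lemma gstar_fill v a b : gs v a -> gs v b ->
  (rank v < rank a)%N -> (rank v < rank b)%N -> a != b -> gs a b.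
Proof.
move=> hva hvb ha hb hab.
have hlt : ((rank v).+1 < #|T|)%N by apply: leq_ltn_trans ha _.
apply/existsP; exists (Ordinal hlt) => /=; rewrite ha hb hab /=.
apply/orP; right; apply/existsP; exists v.
by rewrite eqxx (gstar_core hva (ltnW ha)) (gstar_core hvb (ltnW hb)).
Qed.
End FillIn.

Section UpDownReduction.
Variables (R : realFieldType) (T : finType) (rank : T -> 'I_#|T|) (e : rel T).
Variable m : T -> T -> option R.
Hypotheses (e_sym : symmetric e) (e_irr : irreflexive e).
Hypothesis rank_inj : injective rank.
Hypothesis m_nneg : forall x y, gstar rank e x y -> enneg (m x y).
Hypothesis m_lti : lower_triangle rank (gstar rank e) m.

Local Notation gs := (gstar rank e).

Definition updownb (x : T) (q : seq T) : bool :=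
  up_then_down (rank x) [seq nat_of_ord (rank v) | v <- q].

Lemma gstar_rank_neq x y : gs x y -> nat_of_ord (rank x) != rank y.
Proof.
by move/(gstar_neq e_irr); apply: contraNneq => /val_inj/rank_inj ->.
Qed.

Lemma prepend_updown q s x : gs s x -> path gs x q -> updownb x q ->
  exists q', [/\ path gs s q', last s q' = last x q, updownb s q'
    & ele (mlen m s q') (mlen m s (x :: q))].
Proof.
elim: q s x => [|y q IH] s x hsx hxq hud.
  exists [:: x]; split; rewrite /= ?hsx ?ele_refl //.
  rewrite /updownb /= andbT.
  by case: ltngtP (gstar_rank_neq hsx) => // ->.
case: ltngtP (gstar_rank_neq hsx) => [hsx_lt|hxs_lt|//] _.
- (* s :: x :: y :: q still starts by ascending *)
  exists (x :: y :: q); split; rewrite /= ?hsx ?ele_refl //.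
  by rewrite /updownb /= hsx_lt.
case/andP: hxq => hxy hyq.
case: ltngtP (gstar_rank_neq hxy) => [hxy_lt|hyx_lt|//] _; last first.
- (* x :: y :: q starts by descending, so s :: x :: y :: q descends *)
  exists (x :: y :: q); split; rewrite /= ?hsx ?hxy ?hyq ?ele_refl //.
  move: hud; rewrite /updownb /= ltnNge (ltnW hyx_lt) /= => ->.
  by rewrite ltnNge (ltnW hxs_lt) /= hxs_lt.
(* x is a valley between s and y *)
have hyq_ud : updownb y q by move: hud; rewrite /updownb /= hxy_lt.
have hmxy := m_nneg hxy.
have [esy|hsy] := eqVneq s y.
  (* the loop s, x, s is dropped *)
  subst y; exists q; split => //; rewrite !mlen_cons.
  exact: ele_trans (ele_addl _ hmxy) (ele_addl _ (m_nneg hsx)).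
(* the fill-in edge s-y shortcuts the valley *)
have hsy_edge : gs s y
  by apply: (gstar_fill e_irr (gstar_sym e_sym hsx) hxy hxs_lt hxy_lt).
have [q' [h1 h2 h3 h4]] := IH s y hsy_edge hyq hyq_ud.
exists q'; split => //; apply: ele_trans h4 _.
rewrite !mlen_cons eaddA; apply: ele_add; last exact: ele_refl.
exact: m_lti hsy_edge hsx hxy hxs_lt hxy_lt.
Qed.

Lemma updown_reduce p s : path gs s p -> exists q,
  [/\ path gs s q, last s q = last s p, updownb s q & ele (mlen m s q) (mlen m s p)].
Proof.
elim: p s => [|x p IH] s /=; first by move=> _; exists [::]; rewrite ele_refl.
case/andP => hsx /IH [q [h1 h2 h3 h4]].
have [q' [g1 g2 g3 g4]] := prepend_updown hsx h1 h3.
exists q'; split => //; first by rewrite g2 h2.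
by apply: ele_trans g4 _; rewrite !mlen_cons ele_add // ele_refl.
Qed.

Lemma updownbP s q : updownb s q -> updown rank s q.
Proof.
by move/up_then_downP => [j [h1 h2]]; exists j; rewrite map_take map_drop.
Qed.
End UpDownReduction.

Lemma metric_nneg (R : realFieldType) (T : finType) (estar : rel T)
    (m : T -> T -> option R) :
  is_metric estar m -> forall x y, estar x y -> enneg (m x y).
Proof.
by case=> _ hpos x y /hpos; rewrite /enneg; case: (m x y) => // r /ltW.
Qed.

Theorem mainTheorem5 (R : realFieldType) (T : finType) (e : rel T)
  (e_sym : symmetric e) (e_irr : irreflexive e)
  (e_conn : forall s t : T, connect e s t)
  (w : T -> T -> R) (w_sym : forall x y, w x y = w y x)
  (w_pos : forall x y, e x y -> 0 < w x y)
  (rank : T -> 'I_#|T|) (rank_bij : bijective rank)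
  (m : T -> T -> option R)
  (m_metric : is_metric (gstar rank e) m)
  (m_resp : respects e (gstar rank e) w m)
  (m_lti : lower_triangle rank (gstar rank e) m) :
  forall (s t : T) (d : R), is_distI e w s t d ->
    exists p : seq T,
      [/\ path (gstar rank e) s p, last s p = t, updown rank s p
        & mlen m s p = Some d].
Proof.
move=> s t d /m_resp [dA_min [//|[p [hp hpt hpd]]]].
have [q [hq hqt hud hle]] :=
  updown_reduce e_sym e_irr (bij_inj rank_bij) (metric_nneg m_metric) m_lti hp.
exists q; split; first exact: hq.
- by rewrite hqt.
- exact: updownbP.
apply: ele_anti; first by apply: dA_min; rewrite // hqt.
by rewrite -hpd.
Qed.
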